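(* For every skew brace $A$, the space $\mathrm{Spec}\,A$ with the spectral topology is a $T_0$-space.
   Context: A (left) skew brace is a triple $(A,+,\circ)$ where $(A,+)$ and $(A,\circ)$ are groups such that $a\circ(b+c)=a\circ b-a+a\circ c$ for all $a,b,c$; common identity $e$. Put $\lambda_a(b)=-a+a\circ b$ and $a*b=-a+a\circ b-b$. An ideal is a normal subgroup $I$ of both $(A,+)$ and $(A,\circ)$ with $\lambda_a(I)\subseteq I$ for all $a$. A prime ideal is a proper ideal $P$ such that for any subsets $X,Y$ of $A$, $\{x*y\mid x\in X,y\in Y\}\subseteq P$ implies $X\subseteq P$ or $Y\subseteq P$; $\mathrm{Spec}\,A$ is the set of prime ideals. The spectral topology has closed sets $H(I)=\{P\in\mathrm{Spec}\,A\mid I\subseteq P\}$, $I$ an ideal. *)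

From Stdlib Require Import Classical.

Record skew_brace : Type := SkewBrace {
  carrier :> Type;
  add : carrier -> carrier -> carrier;
  opp : carrier -> carrier;
  circ : carrier -> carrier -> carrier;
  cinv : carrier -> carrier;
  e : carrier;
  add_assoc : forall a b c, add a (add b c) = add (add a b) c;
  add_e_l : forall a, add e a = a;
  add_e_r : forall a, add a e = a;
  add_opp_l : forall a, add (opp a) a = e;
  add_opp_r : forall a, add a (opp a) = e;
  circ_assoc : forall a b c, circ a (circ b c) = circ (circ a b) c;
  circ_e_l : forall a, circ e a = a;
  circ_e_r : forall a, circ a e = a;
  circ_inv_l : forall a, circ (cinv a) a = e;
  circ_inv_r : forall a, circ a (cinv a) = e;
  brace_compat : forall a b c,
    circ a (add b c) = add (add (circ a b) (opp a)) (circ a c)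
}.

Arguments add {_}. Arguments opp {_}. Arguments circ {_}.
Arguments cinv {_}. Arguments e {_}.

Section SB.
Variable A : skew_brace.

Definition lam (a b : A) : A := add (opp a) (circ a b).
Definition star (a b : A) : A := add (add (opp a) (circ a b)) (opp b).

Definition subset (X Y : A -> Prop) : Prop := forall x, X x -> Y x.

Definition ideal (I : A -> Prop) : Prop :=
  I e /\ (forall x y, I x -> I y -> I (add x y)) /\ (forall x, I x -> I (opp x)) /\
  (forall a x, I x -> I (add (add a x) (opp a))) /\
  (forall x y, I x -> I y -> I (circ x y)) /\ (forall x, I x -> I (cinv x)) /\
  (forall a x, I x -> I (circ (circ a x) (cinv a))) /\
  (forall a x, I x -> I (lam a x)).

Definition prime_ideal (P : A -> Prop) : Prop :=
  ideal P /\ (exists a, ~ P a) /\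
  forall X Y : A -> Prop,
    (forall x y, X x -> Y y -> P (star x y)) -> subset X P \/ subset Y P.

Definition Spec : Type := { P : A -> Prop | prime_ideal P }.

Definition H (I : A -> Prop) : Spec -> Prop := fun P => subset I (proj1_sig P).

Definition spectral_closed (C : Spec -> Prop) : Prop :=
  exists I, ideal I /\ forall P, C P <-> H I P.

Definition spec_eq (P Q : Spec) : Prop :=
  forall x, proj1_sig P x <-> proj1_sig Q x.

(* T0: any two distinct points are separated by a closed set
   (equivalently, by an open set, the complement) *)
Definition spectral_T0 : Prop :=
  forall P Q : Spec, ~ spec_eq P Q ->
    exists C, spectral_closed C /\ ((C P /\ ~ C Q) \/ (C Q /\ ~ C P)).
End SB.

(* The closure of a point P of Spec A is H(P), and H(P) contains Q exactly
   when P is contained in Q.  Two primes with the same closure therefore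
   contain each other, so distinct primes are separated by one of the
   closed sets H(P), H(Q). *)
From Stdlib Require Import Classical.

Section Spectrum.
Variable A : skew_brace.

Lemma spectral_closed_H (I : A -> Prop) : ideal A I -> spectral_closed A (H A I).
Proof. intro HI. exists I. split; [exact HI | tauto]. Qed.

Lemma H_self (P : Spec A) : H A (proj1_sig P) P.
Proof. intros x Px. exact Px. Qed.

Lemma spec_eq_subset (P Q : Spec A) :
  subset A (proj1_sig P) (proj1_sig Q) -> subset A (proj1_sig Q) (proj1_sig P) ->
  spec_eq A P Q.
Proof. intros HPQ HQP x. split; [apply HPQ | apply HQP]. Qed.

Lemma H_point_separates (P Q : Spec A) :
  ~ subset A (proj1_sig P) (proj1_sig Q) ->
  exists C, spectral_closed A C /\ C P /\ ~ C Q.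
Proof.
  intro HPQ. exists (H A (proj1_sig P)).
  split; [apply spectral_closed_H, (proj1 (proj2_sig P)) | split; [apply H_self | exact HPQ]].
Qed.

End Spectrum.

Theorem proposition4p6 : forall A : skew_brace, spectral_T0 A.
Proof.
  intros A P Q Hne.
  destruct (classic (subset A (proj1_sig P) (proj1_sig Q))) as [HPQ | HPQ].
  - assert (HQP : ~ subset A (proj1_sig Q) (proj1_sig P))
      by (intro HQP; exact (Hne (spec_eq_subset A P Q HPQ HQP))).
    destruct (H_point_separates A Q P HQP) as (C & HC & CQ & nCP).
    exists C. auto.
  - destruct (H_point_separates A P Q HPQ) as (C & HC & CP & nCQ).
    exists C. auto.
Qed.
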